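(* Let $n\in\mathbb N$ and suppose $\vartheta_n\equiv1$. For $h\in\mathsf F(\mathcal X_n)$ let $\bar h(\bar x_n)=h(\bar x^2_n)$. Then $\bar\eta_n\bar h=\eta_nh$ and, for every $\ell\in\llbracket0,n\rrbracket$, $\bar\sigma^2_{\ell,n}(\bar h)=\sigma^2_{\ell,n}(h)$. More generally, for every $m\in\mathbb N^*$ and every $f\in\mathsf F(\mathcal X_m)$ with $\bar f(\bar x_m)=f(\bar x^2_m)$, one has $\bar\eta_m\bar f=\eta_m(\vartheta_mf)/\eta_m\vartheta_m$.
   Context: Notation: $\mathbb N=\{0,1,2,\dots\}$, $\mathbb N^*=\mathbb N\setminus\{0\}$; $\llbracket m,n\rrbracket=\{k\in\mathbb N: m\le k\le n\}$; for a measure $\mu$, a (possibly unnormalised) kernel $K$ and a bounded measurable $h$: $\mu h=\int h\,d\mu$, $Kh(x)=\int h(y)K(x,dy)$, $\mu K(A)=\int K(x,A)\mu(dx)$, $KL(x,A)=\int K(x,dy)L(y,A)$. $\mathsf F(\mathcal X)$ denotes the set of bounded measurable real functions on $(\mathsf X,\mathcal X)$. Model: $(\mathsf X_n,\mathcal X_n)_{n\in\mathbb N}$ are measurable spaces; for each $n$, $L_n:\mathsf X_n\times\mathcal X_{n+1}\to\mathbb R_+$ is a kernel with $\sup_{x}L_n\mathbf 1_{\mathsf X_{n+1}}(x)<\infty$; $L_{k:m}=L_kL_{k+1}\cdots L_m$ if $k\le m$ and $L_{k:m}=\mathrm{id}$ otherwise; $\chi$ is a finite measure on $\mathcal X_0$;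 $\eta_n=\chi L_{0:n-1}/(\chi L_{0:n-1}\mathbf 1_{\mathsf X_n})$ (normalising constants assumed positive and finite). Algorithmic ingredients: a probability measure $\nu$ on $\mathcal X_0$ with $\chi\ll\nu$ and $w_{-1}=d\chi/d\nu$; measurable positive functions $\vartheta_n$ on $\mathsf X_n$ (adjustment multipliers); Markov kernels $P_n$ from $\mathsf X_n$ to $\mathcal X_{n+1}$ and measurable $w_n:\mathsf X_n\times\mathsf X_{n+1}\to\mathbb R_+$ with $\int h(y)L_n(x,dy)=\int h(y)w_n(x,y)P_n(x,dy)$ for all $x\in\mathsf X_n$, $h\in\mathsf F(\mathcal X_{n+1})$. Assume all quantities below are finite (e.g. $\vartheta_m$, $w_m/\vartheta_m$, $w_{-1}$ bounded). Asymptotic variance: for $h\in\mathsf F(\mathcal X_n)$ and $\ell\in\llbracket0,n\rrbracket$, $$\sigma^2_{\ell,n}(h)=\mathbf 1_{\{\ell=0\}}\frac{\chi\big(w_{-1}\{L_{0:n-1}(h-\eta_nh)\}^2\big)}{(\chi L_{0:n-1}\mathbf 1_{\mathsf X_n})^2}+\sum_{m=(\ell-1)\vee0}^{n-1}\eta_m\vartheta_m\,\frac{\int\eta_m(dx)\,\vartheta_m(x)^{-1}\int L_m(x,dy)\,w_m(x,y)\{L_{m+1:n-1}(h-\eta_nh)(y)\}^2}{(\eta_mL_{m:n-1}\mathbf 1_{\mathsf X_n})^2}.$$ Auxiliary Feynman–Kac model: $\bar{\mathsf X}_0=\mathsf X_0$ and $\bar{\mathsf X}_n=\mathsf X_{n-1}\times\mathsf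 X_n$ for $n\ge1$, elements $\bar x_n=(\bar x^1_n,\bar x^2_n)$, with the convention $\bar x_0^2=\bar x_0$. Potentials $\bar g_0(x_0)=\vartheta_0(x_0)w_{-1}(x_0)$ and $\bar g_n(\bar x_n)=w_{n-1}(\bar x_n^1,\bar x_n^2)\vartheta_n(\bar x_n^2)/\vartheta_{n-1}(\bar x^1_n)$ for $n\ge1$; Markov kernels $\bar M_n(\bar x_n,d\bar x_{n+1})=\delta_{\bar x^2_n}(d\bar x^1_{n+1})\,P_n(\bar x^1_{n+1},d\bar x^2_{n+1})$. Set $\bar L_n(\bar x_n,d\bar x_{n+1})=\bar M_n(\bar x_n,d\bar x_{n+1})\bar g_{n+1}(\bar x_{n+1})$, $\bar L_{k:m}$ the corresponding products, $\bar\chi(d\bar x_0)=\bar g_0(\bar x_0)\nu(d\bar x_0)$ and $\bar\eta_m=\bar\chi\bar L_{0:m-1}/\bar\chi\bar L_{0:m-1}\mathbf 1$. Let $\bar\sigma^2_{\ell,n}$ denote the asymptotic variance formula above applied to this auxiliary model with initial measure $\bar\chi$, kernels $\bar L_m$, initial density $\bar g_0$ in place of $w_{-1}$, adjustment multipliers identically $1$, and $\bar g_{m+1}(\bar y)$ in place of $w_m(x,y)$, i.e. $$\bar\sigma^2_{\ell,n}(\bar h)=\mathbf 1_{\{\ell=0\}}\frac{\bar\chi(\bar g_0\{\bar L_{0:n-1}(\bar h-\bar\eta_n\bar h)\}^2)}{(\bar\chi\bar L_{0:n-1}\mathbf 1)^2}+\sum_{m=(\ell-1)\vee0}^{n-1}\frac{\bar\eta_m\bar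 L_m(\bar g_{m+1}\{\bar L_{m+1:n-1}(\bar h-\bar\eta_n\bar h)\}^2)}{(\bar\eta_m\bar L_{m:n-1}\mathbf 1)^2}.$$ *)

From HB Require Import structures.
From mathcomp Require Import all_boot all_order all_algebra.
From mathcomp Require Import all_classical all_reals all_analysis.
From Stdlib Require Import PeanoNat.


Import Order.TTheory GRing.Theory Num.Theory.
Local Open Scope ring_scope.

(* Generic Feynman-Kac quantities, expressed through the action of the  *)
(* initial measure on functions ([chi h] = chi h) and the action of the *)
(* kernels on functions ([Lop n h x] = L_n h (x)).                      *)
Section GenericFK.
Variables (R : realType) (X : nat -> Type).
Variable chi : (X 0 -> R) -> R.
Variable Lop : forall n, (X n.+1 -> R) -> X n -> R.

(* Lgap j k h = L_k L_{k+1} ... L_{k+j-1} h  (h a function on X_(j+k)) *)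
Fixpoint Lgap (j k : nat) : (X (Nat.add j k) -> R) -> X k -> R :=
  match j return (X (Nat.add j k) -> R) -> X k -> R with
  | 0 => fun h => h
  | S j' => fun h => Lgap j' k (Lop (Nat.add j' k) h)
  end.

Definition castX (m n : nat) (e : m = n) (h : X n -> R) : X m -> R :=
  eq_rect_r (fun p => X p -> R) h e.

(* Lfrom k n h = L_{k:n-1} h, for k <= n  (identity when k = n);
   for k > n (never used) it is 0. *)
Definition Lfrom (k n : nat) (h : X n -> R) : X k -> R :=
  match Nat.eq_dec (Nat.add (Nat.sub n k) k) n with
  | left e => Lgap (Nat.sub n k) k (castX _ _ e h)
  | right _ => fun _ => 0
  end.

Definition FKeta (n : nat) (h : X n -> R) : R :=
  chi (Lfrom 0 n h) / chi (Lfrom 0 n (fun _ => 1)).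

Variable w0 : X 0 -> R.
Variable theta : forall n, X n -> R.
Variable w : forall n, X n -> X n.+1 -> R.

Definition FKsigma2 (l n : nat) (h : X n -> R) : R :=
  let hc := fun x => h x - FKeta n h in
  (if l == 0%N then
     chi (fun x => w0 x * (Lfrom 0 n hc x) ^+ 2)
       / (chi (Lfrom 0 n (fun _ => 1))) ^+ 2
   else 0)
  + \sum_(l.-1 <= m < n)
      (FKeta m (theta m)
       * FKeta m (fun x => (theta m x)^-1
                 * Lop m (fun y => w m x y * (Lfrom m.+1 n hc y) ^+ 2) x)
       / (FKeta m (Lfrom m n (fun _ => 1))) ^+ 2).

End GenericFK.

Section Model.
Local Open Scope ereal_scope.
Variables (R : realType) (d : nat -> measure_display)
  (X : forall n, measurableType (d n)).

Definition XT (n : nat) : Type := X n.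

Definition chiF (chi : {finite_measure set X 0 -> \bar R}) (h : XT 0 -> R) : R :=
  fine (\int[chi]_x (h x)%:E).

Definition LF (L : forall n, R.-fker (X n) ~> (X n.+1))
  (n : nat) (h : XT n.+1 -> R) (x : XT n) : R :=
  fine (\int[L n x]_y (h y)%:E).

Definition barX (n : nat) : Type :=
  match n with 0 => XT 0 | S p => (XT p * XT p.+1)%type end.

Definition snd2 (n : nat) : barX n -> XT n :=
  match n return barX n -> XT n with
  | 0 => fun x => x
  | S p => fun x => x.2
  end.

Definition gbar (wm1 : XT 0 -> R) (theta : forall n, XT n -> R)
  (w : forall n, XT n -> XT n.+1 -> R) (n : nat) : barX n -> R :=
  match n return barX n -> R with
  | 0 => fun x => (theta 0 x * wm1 x)%R
  | S p => fun x => (w p x.1 x.2 * theta p.+1 x.2 / theta p x.1)%R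
  end.

Definition chibar (nu : probability (X 0) R) (wm1 : XT 0 -> R)
  (theta : forall n, XT n -> R) (w : forall n, XT n -> XT n.+1 -> R)
  (h : barX 0 -> R) : R :=
  fine (\int[nu]_x (gbar wm1 theta w 0 x * h x)%:E).

(* \bar L_n h (xb) = int delta_{xb^2}(dx') P_n(x', dy) \bar g_{n+1}(x',y) h(x',y)
                   = int P_n(xb^2, dy) \bar g_{n+1}(xb^2, y) h(xb^2, y) *)
Definition Lbar (P : forall n, R.-pker (X n) ~> (X n.+1)) (wm1 : XT 0 -> R)
  (theta : forall n, XT n -> R) (w : forall n, XT n -> XT n.+1 -> R)
  (n : nat) (h : barX n.+1 -> R) (xb : barX n) : R :=
  fine (\int[P n (snd2 n xb)]_y
          (gbar wm1 theta w n.+1 ((snd2 n xb, y) : barX n.+1)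
           * h ((snd2 n xb, y) : barX n.+1))%:E).

End Model.

Arguments Lgap {R} X Lop j k _ _.
Arguments castX {R} X m n e h _.
Arguments Lfrom {R} X Lop k n h _.
Arguments FKeta {R} X chi Lop n h.
Arguments FKsigma2 {R} X chi Lop w0 theta w l n h.
Arguments XT {d} X n.
Arguments chiF {R d X} chi h.
Arguments LF {R d X} L n h x.
Arguments barX {d} X n.
Arguments snd2 {d} X n _.
Arguments gbar {R d} X wm1 theta w n _.
Arguments chibar {R d X} nu wm1 theta w h.
Arguments Lbar {R d X} P wm1 theta w n h xb.

(* Write  lift_k F (xb) = F (xb^2) / theta_k (xb^2)  for the theta-normalised
   lift of a function F on X_k to the auxiliary space barX_k.  Because
   bar g_(k+1)(x, y) = w_k(x, y) theta_(k+1)(y) / theta_k(x) and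
   L_k(x, dy) = w_k(x, y) P_k(x, dy), one auxiliary step transports lifts:
       bar L_k (lift_(k+1) F) = lift_k (L_k F),
   and the initial measure satisfies  bar chi (lift_0 G) = chi G  because
   w_(-1) is the density of chi with respect to nu.  Iterating,
       bar chi bar L_(0:m-1) (lift_m F) = chi L_(0:m-1) F,
   which yields  bar eta_m (lift_m F) = chi L_(0:m-1) F / chi L_(0:m-1) theta_m,
   hence the formula for bar eta_m f.  The two ingredients of the variance,
   bar L_m (bar g_(m+1) (lift H)^2) and bar chi (bar g_0 (lift G)^2), reduce
   in the same way to the corresponding quantities of the original model
   (theta_m^-1 L_m (w_m H^2) and chi (w_(-1) G^2)), so every term of
   bar sigma^2 equals the matching term of sigma^2 once theta_n = 1. *)

From HB Require Import structures.
From mathcomp Require Import all_boot all_order all_algebra.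
From mathcomp Require Import all_classical all_reals all_analysis.
From mathcomp Require Import measurable_realfun lebesgue_integral.
From mathcomp Require Import ring.
From Stdlib Require Import PeanoNat.
Import Order.TTheory GRing.Theory Num.Theory.
Local Open Scope ring_scope.

Definition bounded_mfun d (T : measurableType d) (R : realType) (f : T -> R) :=
  measurable_fun setT f /\ exists c : R, forall x, `|f x| <= c.
Arguments bounded_mfun {d T R} f.

Lemma bounded_mfunM {d} {T : measurableType d} {R : realType} {f g : T -> R} :
  bounded_mfun f -> bounded_mfun g -> bounded_mfun (fun x => f x * g x).
Proof.
move=> [mf [cf hf]] [mg [cg hg]]; split; first exact: measurable_funM.
exists (`|cf| * `|cg|) => x; rewrite normrM ler_pM //.
  by rewrite (le_trans (hf x)) // ler_norm.
by rewrite (le_trans (hg x)) // ler_norm.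
Qed.

Lemma bounded_mfun_rpos {d} {T : measurableType d} {R : realType} {f : T -> R} :
  bounded_mfun f -> bounded_mfun f^\+.
Proof.
move=> [mf [c hc]]; split; first exact: measurable_funrpos.
exists `|c| => z; rewrite ger0_norm ?funrpos_ge0 // ge_max normr_ge0 andbT.
by rewrite (le_trans (ler_norm _)) // (le_trans (hc z)) // ler_norm.
Qed.

Lemma bounded_mfun_rneg {d} {T : measurableType d} {R : realType} {f : T -> R} :
  bounded_mfun f -> bounded_mfun f^\-.
Proof.
move=> [mf [c hc]]; split; first exact: measurable_funrneg.
exists `|c| => z; rewrite ger0_norm ?funrneg_ge0 // ge_max normr_ge0 andbT.
by rewrite (le_trans (ler_norm _)) // normrN (le_trans (hc z)) // ler_norm.
Qed.

Lemma bounded_mfun_section {d d'} {X : measurableType d} {Y : measurableType d'}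
  {R : realType} {k : X * Y -> R} x :
  bounded_mfun k -> bounded_mfun (fun y => k (x, y)).
Proof.
move=> [mk [c hc]]; split; last by exists c.
exact: measurableT_comp mk (pair1_measurable x).
Qed.

Section finite_measure_integration.
Context d (T : measurableType d) (R : realType) (mu : {measure set T -> \bar R}).
Hypothesis mu_fin : (mu setT < +oo)%E.

Lemma bounded_integrable (f : T -> R) :
  bounded_mfun f -> mu.-integrable setT (EFin \o f).
Proof.
move=> [mf [c hc]]; apply/integrableP; split; first exact/measurable_EFinP.
apply: (le_lt_trans (integral_le_bound (`|c|%:E) _ _ _ _)) => //.
- exact/measurable_EFinP.
- by apply: aeW => x _ /=; rewrite lee_fin (le_trans (hc x)) // ler_norm.
- by rewrite lte_mul_pinfty.
Qed.

Lemma Rintegral_bounded (f : T -> R) (c : R) : bounded_mfun f ->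
  (forall x, `|f x| <= c) -> `|Rintegral mu setT f| <= c * fine (mu setT).
Proof.
move=> bf hc; have [mf _] := bf.
apply: (le_trans (le_normr_Rintegral _ _)) => //; first exact: bounded_integrable.
rewrite -Rintegral_cst //; apply: le_Rintegral => //.
- apply: bounded_integrable; split; first exact: measurableT_comp.
  by exists c => x; rewrite normr_id.
- by apply: bounded_integrable; split => //; exists `|c| => x.
Qed.

End finite_measure_integration.
Arguments bounded_integrable {d T R mu} mu_fin {f}.
Arguments Rintegral_bounded {d T R mu} mu_fin {f} c.

Section finite_kernel_integration.
Context d d' (X : measurableType d) (Y : measurableType d') (R : realType).
Variable l : R.-fker X ~> Y.

Lemma kernel_mass_finite x : (l x setT < +oo)%E.
Proof. by have [r hr] := measure_uub l; exact: lt_trans (hr x) (ltry r). Qed.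

Lemma kernel_mass_bounded : exists r : R, forall x, fine (l x setT) <= r.
Proof.
have [r hr] := measure_uub l; exists r => x.
have := hr x; have : (0 <= l x setT)%E by [].
by case: (l x setT) => //= s _ /ltW; rewrite lee_fin.
Qed.

Lemma measurable_kernel_integral_ge0 (p : X * Y -> R) : (forall z, 0 <= p z) ->
  measurable_fun setT p ->
  measurable_fun setT (fun x => Rintegral (l x) setT (fun y => p (x, y))).
Proof.
move=> p0 mp; apply: measurableT_comp (fine_measurable _) _ => //.
apply: (measurable_fun_integral_finite_kernel (EFin \o p)) => [z|].
  by rewrite /= lee_fin.
exact/measurable_EFinP.
Qed.

(* The general case follows by splitting k into its positive and negative
   parts; the bound uses the uniform bound on the masses l x setT. *)
Lemma kernel_integral_bounded (k : X * Y -> R) : bounded_mfun k ->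
  bounded_mfun (fun x => Rintegral (l x) setT (fun y => k (x, y))).
Proof.
move=> bk; have [mk [c hc]] := bk.
have section_integrable (p : X * Y -> R) x : bounded_mfun p ->
    (l x).-integrable setT (EFin \o (fun y => p (x, y))).
  move=> bp; apply: bounded_integrable; first exact: kernel_mass_finite.
  exact: bounded_mfun_section.
split.
  have -> : (fun x => Rintegral (l x) setT (fun y => k (x, y))) =
      (fun x => Rintegral (l x) setT (fun y => k^\+ (x, y))
              - Rintegral (l x) setT (fun y => k^\- (x, y))).
    apply/funext => x; rewrite -RintegralB //; last 2 first.
    - exact/section_integrable/bounded_mfun_rpos.
    - exact/section_integrable/bounded_mfun_rneg.
    by apply: eq_Rintegral => y _; rewrite -[in LHS](funrposBneg k).
  apply: measurable_funB; apply: measurable_kernel_integral_ge0.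
  - exact: funrpos_ge0.
  - exact: measurable_funrpos.
  - exact: funrneg_ge0.
  - exact: measurable_funrneg.
have [r hr] := kernel_mass_bounded.
exists (`|c| * r) => x.
apply: le_trans (Rintegral_bounded (kernel_mass_finite x) `|c| _ _) _.
- exact: bounded_mfun_section.
- by move=> y; rewrite (le_trans (hc _)) // ler_norm.
- exact: ler_wpM2l.
Qed.

End finite_kernel_integration.
Arguments kernel_mass_finite {d d' X Y R} l x.
Arguments kernel_integral_bounded {d d' X Y R} l k.

(* Change of variables for a measure nu with a density g with respect to a
   sigma-finite measure mu: g agrees mu-a.e. with the Radon-Nikodym
   derivative d nu / d mu, so the library's change of variables applies. *)
Section density.
Local Open Scope ereal_scope.
Context d (T : measurableType d) (R : realType).
Variables (mu : {sigma_finite_measure set T -> \bar R})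
  (nu : {finite_measure set T -> \bar R}) (g : T -> R).
Hypotheses (mg : measurable_fun setT g) (g_ge0 : forall x, (0 <= g x)%R)
  (nu_g : forall A, measurable A -> nu A = \int[mu]_(x in A) (g x)%:E).

Lemma density_dominates : nu `<< mu.
Proof.
apply/null_content_dominatesP => A mA muA0; rewrite nu_g //.
apply: (null_set_integral (f := EFin \o g)) => //.
exact/measurable_funTS/measurable_EFinP.
Qed.

(* The density is integrable, since its integral is the finite mass of nu. *)
Lemma density_integrable : mu.-integrable setT (EFin \o g).
Proof.
apply/integrableP; split; first exact/measurable_EFinP.
rewrite (eq_integral (fun x => (g x)%:E)); last first.
  by move=> x _; rewrite /= ger0_norm.
by rewrite -nu_g //; exact: fin_num_fun_lty (fin_num_measure nu).
Qed.

Lemma density_ae_eq :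
  ae_eq mu setT (EFin \o g) (Radon_Nikodym (charge_of_finite_measure nu) mu).
Proof.
have dom := density_dominates.
apply: (integral_ae_eq measurableT density_integrable).
  exact/measurable_int/Radon_Nikodym_integrable.
by move=> E _ mE; rewrite -Radon_Nikodym_integral //; exact/esym/nu_g.
Qed.

Lemma integral_density (f : T -> \bar R) : nu.-integrable setT f ->
  \int[mu]_x (f x * (g x)%:E) = \int[nu]_x f x.
Proof.
move=> fi; rewrite -(Radon_Nikodym_change_of_variables density_dominates) //.
have dom := density_dominates; have mf := measurable_int _ fi.
apply: ae_eq_integral => //.
- exact/emeasurable_funM/measurable_EFinP.
- exact/emeasurable_funM/measurable_int/Radon_Nikodym_integrable.
- exact: ae_eqe_mul2l density_ae_eq.
Qed.

Lemma Rintegral_density (G : T -> R) : nu.-integrable setT (EFin \o G) ->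
  Rintegral mu setT (fun x => g x * G x)%R = Rintegral nu setT G.
Proof.
move=> iG; rewrite /Rintegral -integral_density //; congr fine.
by apply: eq_integral => x _; rewrite -EFinM mulrC.
Qed.

End density.
Arguments Rintegral_density {d T R mu nu g} mg g_ge0 nu_g {G}.

Lemma measurable_inv_pos {d} {T : measurableType d} {R : realType} {f : T -> R} :
  measurable_fun setT f -> (forall x, 0 < f x) ->
  measurable_fun setT (fun x => (f x)^-1).
Proof.
move=> mf f_gt0.
have -> : (fun x => (f x)^-1) = (fun x => expR (- ln (f x))).
  by apply/funext => x; rewrite expRN lnK // posrE.
apply: measurableT_comp; first exact: measurable_expR.
apply: measurableT_comp; first exact: oppr_measurable.
by apply: measurableT_comp; [exact: measurable_ln | exact: mf].
Qed.

(* Common normalising constants cancel in ratios; used to compare the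
   normalisations chi L_(0:m-1) theta_m and chi L_(0:m-1) 1 of both models. *)
Lemma ratio_cancel (R : fieldType) (a b c : R) : c != 0 ->
  (a / c) / (b / c) = a / b.
Proof.
move=> c0; have [->|b0] := eqVneq b 0; first by rewrite !mul0r !invr0 !mulr0.
by field; rewrite c0 b0.
Qed.

Lemma variance_term_cancel (R : fieldType) (a b C c : R) : c != 0 ->
  (a / a) * (b / a) / (C / a) ^+ 2 = (a / c) * (b / c) / (C / c) ^+ 2.
Proof.
move=> c0; have [->|a0] := eqVneq a 0; first by rewrite !(mul0r, invr0, mulr0).
have [->|C0] := eqVneq C 0; first by rewrite !(mul0r, expr0n, invr0, mulr0).
by field; rewrite c0 a0 C0.
Qed.

Section auxiliary_model.
Variables (R : realType) (d : nat -> measure_display)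
  (X : forall n, measurableType (d n))
  (chi : {finite_measure set X 0%N -> \bar R})
  (nu : probability (X 0%N) R)
  (L : forall n, R.-fker (X n) ~> (X n.+1))
  (P : forall n, R.-pker (X n) ~> (X n.+1))
  (wm1 : XT X 0 -> R)
  (theta : forall n, XT X n -> R)
  (w : forall n, XT X n -> XT X n.+1 -> R).
Hypothesis wm1_measurable : measurable_fun setT wm1.
Hypothesis wm1_ge0 : forall x, 0 <= wm1 x.
Hypothesis wm1_bounded : exists c : R, forall x, wm1 x <= c.
Hypothesis chi_density : forall A : set (X 0), measurable A ->
  chi A = (\int[nu]_(x in A) (wm1 x)%:E)%E.
Hypothesis theta_measurable : forall n, measurable_fun setT (theta n).
Hypothesis theta_gt0 : forall n x, 0 < theta n x.
Hypothesis theta_bounded : forall n, exists c : R, forall x, theta n x <= c.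
Hypothesis w_measurable :
  forall n, measurable_fun setT (fun p : X n * X n.+1 => w n p.1 p.2).
Hypothesis w_ge0 : forall n x y, 0 <= w n x y.
Hypothesis w_theta_bounded :
  forall n, exists c : R, forall x y, w n x y / theta n x <= c.
Hypothesis L_density : forall n (h : X n.+1 -> R), measurable_fun setT h ->
  (exists c : R, forall y, `|h y| <= c) ->
  forall x, (\int[L n x]_y (h y)%:E = \int[P n x]_y (w n x y * h y)%:E)%E.
Hypothesis chiL1_gt0 :
  forall n, 0 < chiF chi (Lfrom (XT X) (LF L) 0 n (fun _ => 1)).

Local Notation LFbar := (Lbar P wm1 theta w).
Local Notation chibar := (chibar nu wm1 theta w).
Local Notation gbar := (gbar X wm1 theta w).
Local Notation snd2 := (snd2 X).
Local Notation tlift k F :=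
  (fun xb : barX X k => F (snd2 k xb) / theta k (snd2 k xb)).

Lemma theta_neq0 n x : theta n x != 0.
Proof. by rewrite gt_eqF. Qed.

Lemma chiL1_neq0 n : chiF chi (Lfrom (XT X) (LF L) 0 n (fun _ => 1)) != 0.
Proof. by rewrite gt_eqF. Qed.

Lemma theta_bounded_mfun n : bounded_mfun (theta n : X n -> R).
Proof.
split; first exact: theta_measurable.
have [c hc] := theta_bounded n; exists c => x.
by rewrite ger0_norm ?hc // ltW.
Qed.

Lemma LF_bounded n (F : X n.+1 -> R) : bounded_mfun F ->
  bounded_mfun (LF L n F : X n -> R).
Proof.
move=> [mF [c hc]]; apply: (kernel_integral_bounded (L n) (fun z => F z.2)).
by split; [exact: measurableT_comp mF measurable_snd | exists c].
Qed.

Lemma Lfrom_bounded k n (F : X n -> R) : bounded_mfun F ->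
  bounded_mfun (Lfrom (XT X) (LF L) k n F : X k -> R).
Proof.
move=> bF; rewrite /Lfrom; case: Nat.eq_dec => [e|_]; last first.
  by split; [exact: measurable_cst | exists 0 => x; rewrite normr0].
move: (Nat.sub n k) e => j e; subst n.
by elim: j F bF => [|j IH] F bF //=; apply/IH/LF_bounded.
Qed.

(* One auxiliary step reduces to an original step: by L_n = w_n P_n, a
   bar L_n-integral whose integrand bar g_(n+1) h equals w_n F / theta_n is
   L_n F / theta_n. *)
Lemma Lbar_as_L n (h : barX X n.+1 -> R) (F : X n.+1 -> R) (xb : barX X n) :
  bounded_mfun F ->
  (forall y, gbar n.+1 ((snd2 n xb, y) : barX X n.+1)
               * h ((snd2 n xb, y) : barX X n.+1)
             = w n (snd2 n xb) y * (F y / theta n (snd2 n xb))) ->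
  LFbar n h xb = LF L n F (snd2 n xb) / theta n (snd2 n xb).
Proof.
move=> bF hF; rewrite /Lbar /LF; set x := snd2 n xb.
rewrite (eq_integral (fun y => (w n x y * (F y / theta n x))%:E)); last first.
  by move=> y _; rewrite hF.
have [mF [c hc]] := bF.
rewrite -L_density; last first.
- exists (`|c| / theta n x) => y; rewrite normrM ler_pM //.
    by rewrite (le_trans (hc y)) // ler_norm.
  by rewrite ger0_norm // invr_ge0 ltW.
- by apply: measurable_funM => //; exact: measurable_cst.
have := RintegralZr (theta n x)^-1 measurableT
  (bounded_integrable (kernel_mass_finite (L n) x) bF).
by rewrite /Rintegral; apply.
Qed.

Lemma Lbar_lift n (F : X n.+1 -> R) : bounded_mfun F ->
  LFbar n (tlift n.+1 F) = tlift n (LF L n F).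
Proof.
move=> bF; apply/funext => xb; apply: Lbar_as_L => // y /=.
by field; rewrite !theta_neq0.
Qed.

Lemma Lfrom_lift k n (F : X n -> R) : bounded_mfun F ->
  Lfrom (barX X) LFbar k n (tlift n F) = tlift k (Lfrom (XT X) (LF L) k n F).
Proof.
move=> bF; rewrite /Lfrom; case: Nat.eq_dec => [e|_]; last first.
  by apply/funext => xb; rewrite mul0r.
move: (Nat.sub n k) e => j e; subst n.
elim: j F bF => [|j IH] F bF //=.
by rewrite Lbar_lift // IH //; exact: LF_bounded.
Qed.

(* bar chi (lift G) = chi G, because w_(-1) = d chi / d nu. *)
Lemma chibar_lift (G : X 0 -> R) : bounded_mfun G ->
  chibar (tlift 0 G) = chiF chi G.
Proof.
move=> bG; have chi_fin := fin_num_fun_lty (fin_num_measure chi).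
have := Rintegral_density wm1_measurable wm1_ge0 chi_density
  (bounded_integrable chi_fin bG).
rewrite /chibar /chiF /Rintegral => <-; congr fine.
by apply: eq_integral => x _ /=; congr EFin; field; rewrite theta_neq0.
Qed.

Lemma unit_lift k : (fun _ : barX X k => 1) = tlift k (theta k).
Proof. by apply/funext => xb; rewrite divff // theta_neq0. Qed.

Lemma eta_bar_lift m (F : X m -> R) : bounded_mfun F ->
  FKeta (barX X) chibar LFbar m (tlift m F)
  = chiF chi (Lfrom (XT X) (LF L) 0 m F)
    / chiF chi (Lfrom (XT X) (LF L) 0 m (theta m)).
Proof.
move=> bF; have btheta := theta_bounded_mfun m.
rewrite /FKeta unit_lift !Lfrom_lift // !chibar_lift //; exact: Lfrom_bounded.
Qed.

Definition Kvar m (H : X m.+1 -> R) (x : X m) : R :=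
  (theta m x)^-1 * LF L m (fun y => w m x y * H y ^+ 2) x.

Definition Kvar_integrand m (H : X m.+1 -> R) (z : X m * X m.+1) : R :=
  w m z.1 z.2 / theta m z.1 * H z.2 ^+ 2.

Lemma Kvar_integrand_bounded {m} {H : X m.+1 -> R} :
  bounded_mfun H -> bounded_mfun (Kvar_integrand m H).
Proof.
move=> [mH [cH hH]]; have [c hc] := w_theta_bounded m; split.
  apply: measurable_funM; first apply: measurable_funM.
  - exact: w_measurable.
  - apply: (measurableT_comp (f := fun x => (theta m x)^-1)) => //.
    exact: measurable_inv_pos (theta_measurable m) (theta_gt0 m).
  - apply: (measurableT_comp (f := fun y => H y ^+ 2)) => //.
    exact: measurable_funX.
exists (`|c| * `|cH| ^+ 2) => z; rewrite normrM normrX ler_pM //.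
  rewrite ger0_norm ?(le_trans (hc _ _)) ?ler_norm //.
  by rewrite divr_ge0 // ltW.
by rewrite lerXn2r ?nnegrE // (le_trans (hH _)) // ler_norm.
Qed.

Lemma Kvar_integral m (H : X m.+1 -> R) x : bounded_mfun H ->
  Kvar m H x = Rintegral (L m x) setT (fun y => Kvar_integrand m H (x, y)).
Proof.
move=> bH; have bk := Kvar_integrand_bounded bH.
have ik : (L m x).-integrable setT (EFin \o (fun y => Kvar_integrand m H (x, y))).
  apply: bounded_integrable; first exact: kernel_mass_finite.
  exact: bounded_mfun_section.
rewrite /Kvar; have -> : LF L m (fun y => w m x y * H y ^+ 2) x
    = theta m x * Rintegral (L m x) setT (fun y => Kvar_integrand m H (x, y)).
  rewrite -RintegralZl //; apply: eq_Rintegral => y _ /=.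
  by rewrite /Kvar_integrand /=; field; rewrite theta_neq0.
by rewrite mulKf // theta_neq0.
Qed.

Lemma Kvar_bounded m (H : X m.+1 -> R) :
  bounded_mfun H -> bounded_mfun (Kvar m H).
Proof.
move=> bH; have -> : Kvar m H =
    fun x => Rintegral (L m x) setT (fun y => Kvar_integrand m H (x, y)).
  by apply/funext => x; exact: Kvar_integral.
exact: kernel_integral_bounded (Kvar_integrand_bounded bH).
Qed.

Lemma Lbar_variance m (H : X m.+1 -> R) : bounded_mfun H ->
  (fun xb => 1^-1 * LFbar m (fun yb => gbar m.+1 yb * (tlift m.+1 H yb) ^+ 2) xb)
  = tlift m (Kvar m H).
Proof.
move=> bH; apply/funext => xb; rewrite invr1 mul1r Kvar_integral //.
apply: Lbar_as_L => [|y /=].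
  exact/bounded_mfun_section/Kvar_integrand_bounded.
by rewrite /Kvar_integrand /=; field; rewrite !theta_neq0.
Qed.

Lemma chibar_variance (G : X 0 -> R) : bounded_mfun G ->
  chibar (fun xb => gbar 0 xb * (tlift 0 G xb) ^+ 2)
  = chiF chi (fun x => wm1 x * G x ^+ 2).
Proof.
move=> bG; rewrite -chibar_lift; last first.
  have bw : bounded_mfun (wm1 : X 0 -> R).
    by split => //; have [c hc] := wm1_bounded; exists c => x; rewrite ger0_norm.
  under eq_fun do rewrite expr2.
  exact: bounded_mfunM bw (bounded_mfunM bG bG).
by congr chibar; apply/funext => x /=; field; rewrite theta_neq0.
Qed.

Lemma eta_bar_snd m (f : X m -> R) : bounded_mfun f ->
  FKeta (barX X) chibar LFbar m (fun xb => f (snd2 m xb))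
  = FKeta (XT X) (chiF chi) (LF L) m (fun x => theta m x * f x)
    / FKeta (XT X) (chiF chi) (LF L) m (theta m).
Proof.
move=> bf; have -> :
    (fun xb => f (snd2 m xb)) = tlift m (fun x => theta m x * f x).
  by apply/funext => xb; field; rewrite theta_neq0.
rewrite (eta_bar_lift m (fun x => theta m x * f x)); last first.
  exact: bounded_mfunM (theta_bounded_mfun m) bf.
by rewrite /FKeta ratio_cancel // chiL1_neq0.
Qed.

Lemma eta_bar_unit n (h : X n -> R) : (forall x, theta n x = 1) ->
  bounded_mfun h ->
  FKeta (barX X) chibar LFbar n (fun xb => h (snd2 n xb))
  = FKeta (XT X) (chiF chi) (LF L) n h.
Proof.
move=> theta1 bh; have -> : (fun xb => h (snd2 n xb)) = tlift n h.
  by apply/funext => xb; rewrite theta1 divr1.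
rewrite eta_bar_lift //; congr (_ / chiF chi (Lfrom _ _ _ _ _)).
by apply/funext.
Qed.

(* When theta_n = 1 the asymptotic variances agree term by term: the centred
   function is the lift of the centred h, and each summand is rewritten with
   the transport identities above. *)
Lemma sigma_bar_unit n (h : X n -> R) : (forall x, theta n x = 1) ->
  bounded_mfun h -> forall l,
  FKsigma2 (barX X) chibar LFbar (gbar 0) (fun m _ => 1)
    (fun m _ yb => gbar m.+1 yb) l n (fun xb => h (snd2 n xb))
  = FKsigma2 (XT X) (chiF chi) (LF L) wm1 theta w l n h.
Proof.
move=> theta1 bh l; have theta_one : theta n = fun _ => 1 by apply/funext.
have btheta k := theta_bounded_mfun k.
set hcen := fun x => h x - FKeta (XT X) (chiF chi) (LF L) n h.
have bhcen : bounded_mfun (hcen : X n -> R).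
  have [mh [c hc]] := bh; split.
    by apply: measurable_funB => //; exact: measurable_cst.
  exists (c + `|FKeta (XT X) (chiF chi) (LF L) n h|) => x.
  by rewrite (le_trans (ler_normB _ _)) // lerD2r.
have centred_lift : (fun xb => h (snd2 n xb)
    - FKeta (barX X) chibar LFbar n (fun xb => h (snd2 n xb))) = tlift n hcen.
  by apply/funext => xb; rewrite eta_bar_unit // theta1 divr1.
rewrite /FKsigma2 centred_lift (unit_lift n); congr (_ + _).
  case: eqP => // _.
  rewrite !Lfrom_lift // chibar_variance; last exact: Lfrom_bounded.
  rewrite chibar_lift; last exact: Lfrom_bounded _ _ _ (btheta n).
  by rewrite theta_one.
apply: eq_big_nat => m _.
have bH := Lfrom_bounded m.+1 _ _ bhcen.
have bK := Kvar_bounded _ _ bH.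
have bLtheta := Lfrom_bounded m _ _ (btheta n).
rewrite (unit_lift m) (Lfrom_lift m.+1 n hcen bhcen) Lbar_variance //.
rewrite Lfrom_lift // !eta_bar_lift // theta_one /FKeta.
by apply: variance_term_cancel; exact: chiL1_neq0.
Qed.

End auxiliary_model.

Theorem mainTheorem9 (R : realType) (d : nat -> measure_display)
  (X : forall n, measurableType (d n))
  (chi : {finite_measure set X 0%N -> \bar R})
  (nu : probability (X 0%N) R)
  (L : forall n, R.-fker (X n) ~> (X n.+1))
  (P : forall n, R.-pker (X n) ~> (X n.+1))
  (wm1 : XT X 0 -> R)
  (theta : forall n, XT X n -> R)
  (w : forall n, XT X n -> XT X n.+1 -> R) :
  (* w_{-1} = d chi / d nu, bounded *)
  measurable_fun setT wm1 ->
  (forall x, 0 <= wm1 x) ->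
  (exists c : R, forall x, wm1 x <= c) ->
  (forall A : set (X 0), measurable A ->
     chi A = (\int[nu]_(x in A) (wm1 x)%:E)%E) ->
  (* adjustment multipliers: measurable, positive, bounded *)
  (forall n, measurable_fun setT (theta n)) ->
  (forall n x, 0 < theta n x) ->
  (forall n, exists c : R, forall x, theta n x <= c) ->
  (* weights: measurable, nonnegative, w_n / theta_n bounded *)
  (forall n, measurable_fun setT (fun p : X n * X n.+1 => w n p.1 p.2)) ->
  (forall n x y, 0 <= w n x y) ->
  (forall n, exists c : R, forall x y, w n x y / theta n x <= c) ->
  (* L_n(x, dy) = w_n(x, y) P_n(x, dy) *)
  (forall n (h : X n.+1 -> R), measurable_fun setT h ->
     (exists c : R, forall y, `|h y| <= c) ->
     forall x, (\int[L n x]_y (h y)%:E = \int[P n x]_y (w n x y * h y)%:E)%E) ->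
  (* normalising constants positive *)
  (forall n, 0 < chiF chi (Lfrom (XT X) (LF L) 0 n (fun _ => 1))) ->
  (* general identity, m >= 1 *)
  (forall m, (0 < m)%N -> forall f : XT X m -> R,
     measurable_fun setT (f : X m -> R) -> (exists c : R, forall x, `|f x| <= c) ->
     FKeta (barX X) (chibar nu wm1 theta w) (Lbar P wm1 theta w) m
       (fun xb => f (snd2 X m xb))
     = FKeta (XT X) (chiF chi) (LF L) m (fun x => theta m x * f x)
       / FKeta (XT X) (chiF chi) (LF L) m (theta m))
  /\
  (forall n, (forall x, theta n x = 1) ->
   forall h : XT X n -> R,
     measurable_fun setT (h : X n -> R) -> (exists c : R, forall x, `|h x| <= c) ->
     FKeta (barX X) (chibar nu wm1 theta w) (Lbar P wm1 theta w) n
       (fun xb => h (snd2 X n xb))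
       = FKeta (XT X) (chiF chi) (LF L) n h
     /\
     forall l, (l <= n)%N ->
       FKsigma2 (barX X) (chibar nu wm1 theta w) (Lbar P wm1 theta w)
         (gbar X wm1 theta w 0) (fun m _ => 1)
         (fun m _ yb => gbar X wm1 theta w m.+1 yb) l n
         (fun xb => h (snd2 X n xb))
       = FKsigma2 (XT X) (chiF chi) (LF L) wm1 theta w l n h).
Proof.
move=> wm1_measurable wm1_ge0 wm1_bounded chi_density theta_measurable theta_gt0
  theta_bounded w_measurable w_ge0 w_theta_bounded L_density chiL1_gt0.
split=> [m _ f mf bf | n theta1 h mh bh].
  by apply: eta_bar_snd => //; split.
split; first by apply: eta_bar_unit => //; split.
by move=> l _; apply: sigma_bar_unit => //; split.
Qed.
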